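(* For all integers $a, b \ge 2$, $R_\mathrm{cyc}(C_a^\mathrm{mon}, C_b^\mathrm{mon}) = 2ab - 3a - 3b + 6$.
   Context: All graphs are finite, simple and undirected, and a graph of order $n$ has vertex set $\{0,1,\ldots,n-1\}$; $K_n$ is the complete graph on $\{0,\ldots,n-1\}$. A $2$-edge-coloring of $K_n$ assigns each edge a color in $\{1,2\}$. An embedding of $H$ in color $j$ is an injective map $\varphi\colon V(H)\to V(K_n)$ such that every edge $uv$ of $H$ goes to an edge $\{\varphi(u),\varphi(v)\}$ of color $j$; it is increasing up to a cyclic permutation if there exists $t\in V(H)$ such that $(\varphi(t),\ldots,\varphi(|H|-1),\varphi(0),\ldots,\varphi(t-1))$ is increasing. $R_\mathrm{cyc}(H_1,H_2)$ is the smallest $n$ such that every $2$-edge-coloring of $K_n$ admits an embedding of $H_1$ in color $1$ or of $H_2$ in color $2$ that is increasing up to a cyclic permutation. For $n\ge3$ the monotone cycle $C_n^\mathrm{mon}$ has edges $\{i,i+1\}$ ($0\le i\le n-2$) and $\{0,n-1\}$; by convention $C_2^\mathrm{mon}=K_2$. *)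

(* Graphs of order h have vertex set {0,...,h-1} (as nat),
   given by an edge relation on nat; colorings of K_n are functions on
   pairs of vertices in {0,...,n-1}. *)
From mathcomp Require Import all_boot.
Set Implicit Arguments. Unset Strict Implicit. Unset Printing Implicit Defensive.

Definition two_coloring (n : nat) (c : nat -> nat -> nat) : Prop :=
  forall i j, i < n -> j < n -> i != j ->
    c i j = c j i /\ (c i j = 1 \/ c i j = 2).

(* phi : V(H) -> V(K_n) is an embedding of H (order h, edges e) in color j
   that is increasing up to a cyclic permutation. *)
Definition cyc_embedding (h : nat) (e : rel nat) (n : nat)
    (c : nat -> nat -> nat) (j : nat) (phi : nat -> nat) : Prop :=
  [/\ (forall u, u < h -> phi u < n),
      {in [pred u | u < h] &, injective phi},
      (forall u v, u < h -> v < h -> e u v -> c (phi u) (phi v) = j)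
    & exists2 t, t < h & sorted ltn (map phi (rot t (iota 0 h)))].

Definition cyc_arrows (n h1 : nat) (e1 : rel nat) (h2 : nat) (e2 : rel nat)
  : Prop :=
  forall c, two_coloring n c ->
    (exists phi, cyc_embedding h1 e1 n c 1 phi) \/
    (exists phi, cyc_embedding h2 e2 n c 2 phi).

Definition is_Rcyc (h1 : nat) (e1 : rel nat) (h2 : nat) (e2 : rel nat)
    (N : nat) : Prop :=
  cyc_arrows N h1 e1 h2 e2 /\ (forall m, cyc_arrows m h1 e1 h2 e2 -> N <= m).

(* Edges of the monotone cycle C_a^mon on {0,...,a-1}: {i,i+1} for
   0 <= i <= a-2 and {0,a-1}; for a = 2 this is K_2. *)
Definition mon_cycle (a : nat) : rel nat :=
  fun u v => [&& u < a, v < a, u != v &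
     [|| u.+1 == v, v.+1 == u,
         (u == 0) && (v == a.-1) | (v == 0) && (u == a.-1)]].

From mathcomp Require Import all_boot zify.
From Stdlib Require Import Classical.
Set Implicit Arguments. Unset Strict Implicit. Unset Printing Implicit Defensive.

(* Up to rotation, a cyclically increasing copy of C_k^mon in color j is an
   increasing sequence x_0 < ... < x_(k-1) whose consecutive pairs and the pair
   (x_0, x_(k-1)) have color j.

   Upper bound: the j-neighbours of vertex 0 contain no increasing j-path on
   k - 1 vertices (it closes through 0 to a j-cycle of length k) and no
   j'-clique on m vertices (a clique contains a monotone cycle), so there are at
   most (k - 2)(m - 1) of them.  Summing over both colors,
   n - 1 <= (a-2)(b-1) + (b-2)(a-1).

   Lower bound: on 1 + (a-2)(b-1) + (b-2)(a-1) vertices, vertex 0 is followed by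
   a grid X of b - 1 blocks of a - 2 levels and a grid Y of b - 2 blocks of
   a - 1 levels.  Inside X or Y an edge is red (color 1) iff the level goes up;
   an edge from X to Y is red iff exactly one of "the block of the Y-end is
   below the block of the X-end" and "the level of the Y-end is at most the level
   of the X-end" holds.  A rank strictly increasing along red (resp. blue)
   increasing edges bounds the length of a monochromatic cycle, except when it
   starts in X and ends in Y; there the closing edge compares the blocks (resp.
   levels) of the two ends, which makes a second rank increase along the whole
   cycle. *)

Definition colored (c : nat -> nat -> nat) (j : nat) : rel nat :=
  fun u v => (u < v) && (c u v == j).

Definition ascending_cycle (c : nat -> nat -> nat) (j k n : nat) : Prop :=
  exists x s, [/\ size s = k.-1, all (fun v => v < n) (x :: s),
                  path (colored c j) x s & c x (last x s) = j].

Lemma path_colored_ltn c j x s : path (colored c j) x s -> path ltn x s.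
Proof. by apply: sub_path => u v /andP[]. Qed.

Lemma mon_cycle_sym h : symmetric (mon_cycle h).
Proof. by move=> u v; rewrite /mon_cycle eq_sym andbCA orbCA [(_ && _) || _]orbC. Qed.

Lemma cycle_mon_cycle h : 1 < h -> cycle (mon_cycle h) (iota 0 h).
Proof.
case: h => [|[|h]] // _.
have -> : iota 0 h.+2 = 0 :: iota 1 h.+1 by [].
rewrite /cycle rcons_path; apply/andP; split.
  apply/(pathP 0) => i lt_ih; rewrite size_iota in lt_ih.
  by rewrite -[0 :: _]/(iota 0 h.+2) !nth_iota /mon_cycle /=; lia.
have -> : last 0 (iota 1 h.+1) = h.+1 by rewrite -nth_last size_iota nth_iota.
by rewrite /mon_cycle /=; lia.
Qed.

Lemma cyc_embedding_ascending_cycle h n c j phi : 1 < h ->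
  cyc_embedding h (mon_cycle h) n c j phi -> ascending_cycle c j h n.
Proof.
move=> h_gt1 [phi_lt _ phi_edge [t _ asc]].
have cyc : cycle (mon_cycle h) (rot t (iota 0 h)) by rewrite rot_cycle cycle_mon_cycle.
have lt_h : all (fun u => u < h) (rot t (iota 0 h)).
  by apply/allP => u; rewrite mem_rot mem_iota.
have size_r : size (rot t (iota 0 h)) = h by rewrite size_rot size_iota.
move: (rot t _) cyc lt_h size_r asc => [|x s] //; first by move=> _ _ /= h0; rewrite -h0 in h_gt1.
rewrite /cycle rcons_path => /andP[path_s edge_last] lt_h /= size_s asc.
have edge u v : mon_cycle h u v -> c (phi u) (phi v) = j.
  by move=> e_uv; case/and4P: (e_uv) => u_lt v_lt _ _; apply: phi_edge.
exists (phi x), (map phi s); split.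
- by rewrite size_map -size_s.
- by rewrite -map_cons all_map; apply: sub_all lt_h => u /phi_lt.
- have: path [rel u v | (phi u < phi v) && mon_cycle h u v] x s.
    by rewrite path_relI path_s andbT; move: asc; rewrite /= path_map.
  rewrite path_map; apply: sub_path => u v /andP[lt_uv /edge c_uv].
  by rewrite /= /colored lt_uv c_uv eqxx.
- by rewrite last_map; apply: edge; rewrite mon_cycle_sym.
Qed.

Lemma ascending_cycle_cyc_embedding k n c j : 1 < k -> two_coloring n c ->
  ascending_cycle c j k n -> exists phi, cyc_embedding k (mon_cycle k) n c j phi.
Proof.
move=> k_gt1 col [x [s [size_s lt_n path_s closing]]].
have size_xs : size (x :: s) = k by rewrite /= size_s; lia.
have asc : sorted ltn (x :: s) := path_colored_ltn path_s.
have uniq_xs : uniq (x :: s) := sorted_uniq ltn_trans ltnn asc.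
pose phi := nth 0 (x :: s).
have phi_lt u : u < k -> phi u < n.
  by move=> lt_uk; apply: (allP lt_n); rewrite mem_nth ?size_xs.
have phi_sym u v : u < k -> v < k -> u != v -> c (phi u) (phi v) = c (phi v) (phi u).
  by move=> lt_uk lt_vk neq_uv; case: (col _ _ (phi_lt _ lt_uk) (phi_lt _ lt_vk));
     rewrite ?nth_uniq ?size_xs.
have phi_succ u : u.+1 < k -> c (phi u) (phi u.+1) = j.
  move=> lt_uk; have /andP[_ /eqP //] : colored c j (phi u) (phi u.+1).
  by move/(pathP 0): path_s; apply; lia.
have phi_closing : c (phi 0) (phi k.-1) = j by rewrite /phi -size_xs nth_last.
exists phi; split.
- exact: phi_lt.
- by move=> u v; rewrite !inE => lt_uk lt_vk /eqP; rewrite nth_uniq ?size_xs // => /eqP.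
- move=> u v lt_uk lt_vk /and4P[_ _ neq_uv].
  case/or4P=> [/eqP def_v | /eqP def_u | /andP[/eqP-> /eqP->] | /andP[/eqP-> /eqP->]] //.
  + by rewrite -def_v phi_succ // def_v.
  + by rewrite phi_sym // -def_u phi_succ // def_u.
  + by rewrite phi_sym ?phi_closing //; lia.
- exists 0; first lia.
  by rewrite rot0 -size_xs -/(mkseq _ _) mkseq_nth.
Qed.

Lemma pairwise_ascending_cycle c j k n x s :
  size s = k.-1 -> 0 < size s -> all (fun v => v < n) (x :: s) ->
  pairwise (colored c j) (x :: s) -> ascending_cycle c j k n.
Proof.
move=> size_s s_gt0 lt_n clique; exists x, s; split => //; first exact: pairwise_sorted clique.
move: clique; rewrite pairwise_cons => /andP[/allP x_s _].
case: s s_gt0 {size_s lt_n} x_s => [|y s] //= _ x_s.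
by have /andP[_ /eqP] := x_s _ (mem_last y s).
Qed.

Lemma count_le_clique (P : pred nat) (e : rel nat) m n :
  {in P &, forall u v, u < v -> e u v} ->
  (forall x s, all P (x :: s) -> size s = m -> ~ pairwise e (x :: s)) ->
  count P (iota 0 n) <= m.
Proof.
move=> total no_clique; rewrite leqNgt; apply/negP => m_lt.
have asc : sorted ltn (filter P (iota 0 n)).
  exact: (sorted_filter ltn_trans _ (iota_ltn_sorted 0 n)).
have all_P : all P (filter P (iota 0 n)) := filter_all P _.
rewrite -size_filter in m_lt.
case: (filter P _) asc all_P m_lt => [|x s] // asc /andP[Px Ps] /= /ltnSE m_le.
apply: (no_clique x (take m s)); first 2 last.
- apply: subseq_pairwise (_ : subseq _ (x :: s)) _; first by rewrite /= eqxx take_subseq.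
  rewrite (sorted_pairwise ltn_trans) in asc.
  apply: (@sub_in_pairwise nat P ltn e _ (x :: s) _ asc); last by rewrite /= Px.
  by move=> u v Pu Pv; apply: total.
- by rewrite /= Px; apply/allP => v /mem_take; apply: (allP Ps).
- exact: size_takel.
Qed.

Lemma count_le_path_clique (P : pred nat) (e1 e2 : rel nat) k m n :
  {in P &, forall u v, u < v -> e1 u v || e2 u v} ->
  (forall x s, all P (x :: s) -> size s = k -> ~ path e1 x s) ->
  (forall x s, all P (x :: s) -> size s = m -> ~ pairwise e2 (x :: s)) ->
  count P (iota 0 n) <= k * m.
Proof.
elim: k P => [|k IHk] P total no_path no_clique.
  rewrite mul0n leqNgt -has_count; apply/hasP => -[v _ Pv].
  by apply: (no_path v [::]); rewrite /= ?Pv.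
(* The elements of P without an e1-predecessor in P form an e2-clique, and
   every e1-path among the others extends to the left. *)
pose has_pred v := has (fun u => P u && e1 u v) (iota 0 v).
rewrite -size_filter -(count_predC has_pred) !count_filter mulSn addnC.
apply: leq_add.
  apply: (count_le_clique (e := e2)) => [u v /andP[_ Pu] /andP[no_pred_v Pv] lt_uv | x s all_xs].
    case/orP: (total u v Pu Pv lt_uv) => // e1_uv.
    by case/hasP: no_pred_v; exists u; rewrite ?mem_iota ?Pu.
  by apply: no_clique; apply: sub_all all_xs => v /andP[].
apply: IHk => [u v /andP[_ Pu] /andP[_ Pv] | x s | x s].
- exact: total.
- rewrite /= => /andP[/andP[/hasP[u _ /andP[Pu e1_ux]] Px] all_s] size_s path_s.
  apply: (no_path u (x :: s)); rewrite /= ?Pu ?Px ?e1_ux ?size_s //.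
  by apply: sub_all all_s => v /andP[].
- by move=> all_xs; apply: no_clique; apply: sub_all all_xs => v /andP[].
Qed.

Lemma count_colored_neighbours c j j' k m n : 1 < k -> 1 < m ->
  (forall u v, u < v < n -> c u v = j \/ c u v = j') ->
  ~ ascending_cycle c j k n -> ~ ascending_cycle c j' m n ->
  count (fun v => (0 < v < n) && (c 0 v == j)) (iota 0 n) <= (k - 2) * (m - 1).
Proof.
move=> k_gt1 m_gt1 two_colors no_cycle no_cycle'.
apply: (count_le_path_clique (e1 := colored c j) (e2 := colored c j')).
- move=> u v /andP[/andP[_ lt_un] _] /andP[/andP[_ lt_vn] _] lt_uv.
  by rewrite /colored lt_uv; case: (two_colors u v) => [|->|->]; rewrite ?eqxx ?orbT ?lt_uv.
- move=> x s all_xs size_s path_s; apply: no_cycle; exists 0, (x :: s).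
  have [/andP[/andP[x_gt0 lt_xn] /eqP c0x] all_s] := andP all_xs.
  split; first by rewrite /= size_s; lia.
  + by rewrite /= (ltn_trans x_gt0 lt_xn) lt_xn; apply: sub_all all_s => v /andP[/andP[]].
  + by rewrite /= /colored x_gt0 c0x eqxx path_s.
  + by have /andP[_ /eqP] := allP all_xs _ (mem_last x s).
- move=> x s all_xs size_s clique; apply: no_cycle'.
  apply: (pairwise_ascending_cycle (x := x) (s := s)) => //; try lia.
  by apply: sub_all all_xs => v /andP[/andP[]].
Qed.

Lemma count_pos_iota n : count (fun v => 0 < v < n) (iota 0 n) = n.-1.
Proof.
case: n => //= n; rewrite (eq_in_count (a2 := predT)) ?count_predT ?size_iota // => v.
by rewrite mem_iota => /andP[v_gt0 lt_vn]; rewrite v_gt0.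
Qed.

Lemma cyc_arrows_mon_cycle a b n : 1 < a -> 1 < b ->
  (a - 2) * (b - 1) + (b - 2) * (a - 1) < n.-1 ->
  cyc_arrows n a (mon_cycle a) b (mon_cycle b).
Proof.
move=> a_gt1 b_gt1 n_large c col.
suff [cycle1 | cycle2] : ascending_cycle c 1 a n \/ ascending_cycle c 2 b n.
- by left; apply: ascending_cycle_cyc_embedding.
- by right; apply: ascending_cycle_cyc_embedding.
apply: NNPP => /not_or_and[no_cycle1 no_cycle2].
have two_colors u v : u < v < n -> c u v = 1 \/ c u v = 2.
  case/andP=> lt_uv lt_vn.
  by have [] := col u v (ltn_trans lt_uv lt_vn) lt_vn (negbT (ltn_eqF lt_uv)).
have count1 := count_colored_neighbours a_gt1 b_gt1 two_colors no_cycle1 no_cycle2.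
have count2 := count_colored_neighbours b_gt1 a_gt1
  (fun u v uv => proj1 (or_comm _ _) (two_colors u v uv)) no_cycle2 no_cycle1.
have : count (fun v => 0 < v < n) (iota 0 n) <=
    count (fun v => (0 < v < n) && (c 0 v == 1)) (iota 0 n) +
    count (fun v => (0 < v < n) && (c 0 v == 2)) (iota 0 n).
  rewrite -count_predUI; apply: leq_trans (leq_addr _ _); apply: sub_count => v /= v_range.
  by rewrite v_range; case: (two_colors 0 v v_range) => ->.
rewrite count_pos_iota; lia.
Qed.

Section PathPotential.
Variables (T : eqType) (e : rel T) (f : T -> nat).

Lemma path_potential x s : path e x s ->
  {in x :: s &, forall u v, e u v -> f u < f v} -> f x + size s <= f (last x s).
Proof.
elim: s x => [|y s IHs] x /=; first by rewrite addn0.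
move=> /andP[e_xy path_y] f_lt.
have sub_ys : {subset y :: s <= x :: y :: s} by move=> z z_ys; rewrite inE z_ys orbT.
have := IHs y path_y (sub_in2 sub_ys f_lt).
have := f_lt x y; rewrite !inE !eqxx orbT => /(_ isT isT e_xy); lia.
Qed.

Lemma path_le_head (P : pred T) x s : path e x s ->
  (forall u v, e u v -> P v -> P u /\ f v <= f u) ->
  {in x :: s, forall u, P u -> f u <= f x}.
Proof.
move=> + step; elim/last_ind: s => [|s y IHs]; first by move=> _ u; rewrite inE => /eqP->.
rewrite rcons_path -rcons_cons => /andP[path_s e_last] u.
rewrite mem_rcons inE => /orP[/eqP-> Py | u_s Pu]; last exact: IHs.
have [P_last le_last] := step _ _ e_last Py.
by apply: leq_trans le_last (IHs path_s _ (mem_last x s) P_last).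
Qed.

Lemma path_le_last (P : pred T) x s : path e x s ->
  (forall u v, e u v -> P u -> P v /\ f v <= f u) ->
  {in x :: s, forall u, P u -> f (last x s) <= f u}.
Proof.
move=> + step; elim: s x => [|y s IHs] x; first by move=> _ u; rewrite inE => /eqP->.
move=> /= /andP[e_xy path_y] u; rewrite inE => /orP[/eqP-> Px | u_ys Pu]; last exact: IHs.
have [Py le_y] := step _ _ e_xy Px.
by apply: leq_trans (IHs y path_y _ (mem_head y s) Py) le_y.
Qed.

End PathPotential.

Lemma path_ltn_last x s : path ltn x s -> x + size s <= last x s.
Proof. by move=> asc; apply: (path_potential (f := id) asc); apply: in2W. Qed.

Lemma path_ltn_between x s : path ltn x s -> {in x :: s, forall u, x <= u <= last x s}.
Proof.
elim: s x => [|y s IHs] x; first by move=> _ u; rewrite inE => /eqP->; rewrite leqnn.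
move=> /= /andP[lt_xy path_y] u; rewrite inE => /orP[/eqP-> | /(IHs y path_y)/andP[le_yu ->]].
  have /andP[_ le_last] := IHs y path_y y (mem_head y s).
  by rewrite leqnn (leq_trans (ltnW lt_xy) le_last).
by rewrite (leq_trans (ltnW lt_xy) le_yu).
Qed.

Lemma ltn_div_of_modn_le d i j : i < j -> j %% d <= i %% d -> i %/ d < j %/ d.
Proof.
move=> lt_ij le_mod; case: d le_mod => [|d] le_mod; first by rewrite !modn0 in le_mod; lia.
rewrite ltn_neqAle leq_div2r ?(ltnW lt_ij) // andbT; apply/eqP => eq_div.
by move: lt_ij; rewrite (divn_eq i d.+1) (divn_eq j d.+1) eq_div; lia.
Qed.

Section Construction.
Variables a b : nat.
Hypotheses (a_gt1 : 1 < a) (b_gt1 : 1 < b).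

(* Vertex 0, then X = [1, xend) and Y = [xend, yend); X lists b - 1 blocks of
   a - 2 consecutive levels, Y lists b - 2 blocks of a - 1 levels. *)
Definition xend := 1 + (b - 1) * (a - 2).
Definition yend := xend + (b - 2) * (a - 1).

Definition xblock v := (v - 1) %/ (a - 2).
Definition xlevel v := (v - 1) %% (a - 2).
Definition yblock v := (v - xend) %/ (a - 1).
Definition ylevel v := (v - xend) %% (a - 1).

Definition red u v : bool :=
  if u == 0 then v < xend
  else if v < xend then xlevel u < xlevel v
  else if u < xend then (yblock v < xblock u) != (ylevel v <= xlevel u)
  else ylevel u < ylevel v.

Definition construction u v : nat := if red (minn u v) (maxn u v) then 1 else 2.

Lemma construction_two_coloring n : two_coloring n construction.
Proof. by move=> u v _ _ _; rewrite /construction minnC maxnC; case: red; split; auto. Qed.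

Lemma construction_lt u v : u < v -> construction u v = if red u v then 1 else 2.
Proof.
by move=> lt_uv; rewrite /construction (minn_idPl (ltnW lt_uv)) (maxn_idPr (ltnW lt_uv)).
Qed.

Lemma colored_construction1 u v : colored construction 1 u v = (u < v) && red u v.
Proof.
by rewrite /colored; case: (ltnP u v) => // lt_uv; rewrite construction_lt //; case: red.
Qed.

Lemma colored_construction2 u v : colored construction 2 u v = (u < v) && ~~ red u v.
Proof.
by rewrite /colored; case: (ltnP u v) => // lt_uv; rewrite construction_lt //; case: red.
Qed.

Lemma xwidth_gt0 v : 0 < v < xend -> 0 < a - 2.
Proof. by rewrite /xend; case: (a - 2) => //; rewrite muln0; lia. Qed.

Lemma xlevel_lt v : 0 < v < xend -> xlevel v < a - 2.
Proof. by move=> /xwidth_gt0; apply: ltn_pmod. Qed.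

Lemma xblock_lt v : 0 < v < xend -> xblock v < b - 1.
Proof.
by move=> v_range; rewrite ltn_divLR ?(xwidth_gt0 v_range) //; move: v_range; rewrite /xend; lia.
Qed.

Lemma ylevel_lt v : ylevel v < a - 1.
Proof. by rewrite /ylevel ltn_pmod //; lia. Qed.

Lemma yblock_lt v : xend <= v < yend -> yblock v < b - 2.
Proof. by rewrite /yend /yblock ltn_divLR; [move: ((b - 2) * (a - 1)) => k; lia | lia]. Qed.

Lemma xblock_le u v : u <= v -> xblock u <= xblock v.
Proof. by move=> le_uv; apply/leq_div2r/leq_sub2r. Qed.

Lemma yblock_le u v : u <= v -> yblock u <= yblock v.
Proof. by move=> le_uv; apply/leq_div2r/leq_sub2r. Qed.

Lemma xblock_lt_of_xlevel u v :
  0 < u -> u < v -> xlevel v <= xlevel u -> xblock u < xblock v.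
Proof. by move=> u_gt0 lt_uv; apply: ltn_div_of_modn_le; lia. Qed.

Lemma yblock_lt_of_ylevel u v :
  xend <= u -> u < v -> ylevel v <= ylevel u -> yblock u < yblock v.
Proof. by move=> le_u lt_uv; apply: ltn_div_of_modn_le; lia. Qed.

Lemma red0 v : red 0 v = (v < xend).
Proof. by []. Qed.

Lemma redXX u v : 0 < u -> v < xend -> red u v = (xlevel u < xlevel v).
Proof. by rewrite /red => /lt0n_neq0/negPf-> ->. Qed.

Lemma redXY u v : 0 < u < xend -> xend <= v ->
  red u v = ((yblock v < xblock u) != (ylevel v <= xlevel u)).
Proof. by rewrite /red => /andP[/lt0n_neq0/negPf-> ->]; rewrite ltnNge => ->. Qed.

Lemma redYY u v : xend <= u -> u < v -> red u v = (ylevel u < ylevel v).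
Proof.
move=> le_u lt_uv; have u_gt0 : 0 < u by apply: leq_trans le_u.
have u_Y : (u < xend) = false by rewrite ltnNge le_u.
have v_Y : (v < xend) = false by rewrite ltnNge (leq_trans le_u (ltnW lt_uv)).
by rewrite /red (negPf (lt0n_neq0 u_gt0)) u_Y v_Y.
Qed.

Definition red_rank v :=
  if v == 0 then 0 else if v < xend then (xlevel v).+1 else ylevel v + (a - 1).

(* Vertex 0 is blue only towards Y, where blue_rank is at least b - 1. *)
Definition blue_rank v :=
  if v == 0 then b - 2 else if v < xend then xblock v else yblock v + (b - 1).

Lemma red_rank_lt u v : u < v -> red u v -> red_rank u < red_rank v.
Proof.
move=> lt_uv; rewrite /red_rank (negPf (lt0n_neq0 (leq_ltn_trans (leq0n u) lt_uv))).
have [-> | u_gt0] := posnP u; first by rewrite red0 /= => ->.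
have [v_X | v_Y] := ltnP v xend; first by rewrite (ltn_trans lt_uv v_X) redXX.
have [u_X | u_Y] := ltnP u xend; last by rewrite redYY // ltn_add2r.
have u_range : 0 < u < xend by rewrite u_gt0.
by have := xlevel_lt u_range; lia.
Qed.

Lemma blue_rank_lt u v : u < v -> ~~ red u v -> blue_rank u < blue_rank v.
Proof.
move=> lt_uv; rewrite /blue_rank (negPf (lt0n_neq0 (leq_ltn_trans (leq0n u) lt_uv))).
have [-> | u_gt0] := posnP u; first by rewrite red0 /= => /negPf->; lia.
have [v_X | v_Y] := ltnP v xend.
  by rewrite (ltn_trans lt_uv v_X) redXX // -leqNgt; apply: xblock_lt_of_xlevel.
have [u_X | u_Y] := ltnP u xend; last first.
  by rewrite redYY // -leqNgt ltn_add2r; apply: yblock_lt_of_ylevel.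
have u_range : 0 < u < xend by rewrite u_gt0.
by have := xblock_lt u_range; lia.
Qed.

Lemma size_red_path_XY x s : 0 < x < xend -> xend <= last x s ->
  yblock (last x s) < xblock x -> path (colored construction 1) x s -> size s < a - 1.
Proof.
move=> /andP[x_gt0 x_X] y_Y lt_blk path_s.
have between := path_ltn_between (path_colored_ltn path_s).
pose level v := if v < xend then xlevel v else ylevel v.
suff : level x + size s <= level (last x s).
  by rewrite /level x_X (leq_gtF y_Y); have := ylevel_lt (last x s); lia.
apply: path_potential path_s _ => u v u_in v_in.
rewrite colored_construction1 => /andP[lt_uv red_uv].
have /andP[le_xu _] := between u u_in; have /andP[_ le_vy] := between v v_in.
have u_gt0 : 0 < u by apply: leq_trans le_xu.
rewrite /level; have [v_X | v_Y] := ltnP v xend; first by rewrite (ltn_trans lt_uv v_X) -redXX.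
have [u_X | u_Y] := ltnP u xend; last by rewrite -redYY.
(* Blocks are monotone in the vertex, so the closing edge puts every block of
   the Y-part of the path below every block of its X-part. *)
have lt_blk_uv : yblock v < xblock u.
  exact: leq_ltn_trans (yblock_le le_vy) (leq_trans lt_blk (xblock_le le_xu)).
by move: red_uv; rewrite redXY ?u_gt0 ?u_X // lt_blk_uv ltnNge; case: leq.
Qed.

Lemma size_blue_path_XY x s : 0 < x < xend -> xend <= last x s < yend ->
  xlevel x < ylevel (last x s) -> path (colored construction 2) x s -> size s < b - 1.
Proof.
move=> /andP[x_gt0 x_X] y_range lt_lvl path_s; have /andP[y_Y _] := y_range.
have between := path_ltn_between (path_colored_ltn path_s).
have head_lvl : {in x :: s, forall u, u < xend -> xlevel u <= xlevel x}.
  apply: (path_le_head (f := xlevel) (P := fun u => u < xend) path_s) => u v.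
  rewrite colored_construction2 => /andP[lt_uv blue_uv] v_X.
  have u_gt0 : 0 < u by case: posnP blue_uv => // ->; rewrite red0 v_X.
  by split; [apply: ltn_trans lt_uv v_X | move: blue_uv; rewrite redXX // -leqNgt].
have last_lvl : {in x :: s, forall v, xend <= v -> ylevel (last x s) <= ylevel v}.
  apply: (path_le_last (f := ylevel) (P := fun u => xend <= u) path_s) => u v.
  rewrite colored_construction2 => /andP[lt_uv blue_uv] u_Y.
  by split; [apply: leq_trans u_Y (ltnW lt_uv) | move: blue_uv; rewrite redYY // -leqNgt].
pose block v := if v < xend then xblock v else (yblock v).+1.
suff : block x + size s <= block (last x s).
  by rewrite /block x_X (leq_gtF y_Y); have := yblock_lt y_range; lia.
apply: path_potential path_s _ => u v u_in v_in.
rewrite colored_construction2 => /andP[lt_uv blue_uv].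
have /andP[le_xu _] := between u u_in.
have u_gt0 : 0 < u by apply: leq_trans le_xu.
rewrite /block; have [v_X | v_Y] := ltnP v xend.
  rewrite (ltn_trans lt_uv v_X); apply: xblock_lt_of_xlevel => //.
  by move: blue_uv; rewrite redXX // -leqNgt.
have [u_X | u_Y] := ltnP u xend; last first.
  by rewrite ltnS; apply: yblock_lt_of_ylevel => //; move: blue_uv; rewrite redYY // -leqNgt.
(* Levels fall along blue edges inside X and inside Y, so the closing edge
   compares the levels of every X-Y edge of the path the same way. *)
have lt_lvl_uv : xlevel u < ylevel v.
  exact: leq_ltn_trans (head_lvl u u_in u_X) (leq_trans lt_lvl (last_lvl v v_in v_Y)).
by move: blue_uv; rewrite redXY ?u_gt0 ?u_X // (ltn_geF lt_lvl_uv) ltnS; case: ltnP.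
Qed.

Lemma no_red_cycle n : n <= yend -> ~ ascending_cycle construction 1 a n.
Proof.
move=> le_n [x [s [size_s lt_n path_s closing]]].
set y := last x s in closing.
have lt_y : y < yend by apply: leq_trans le_n; apply: (allP lt_n); apply: mem_last.
have lt_xy : x < y by have := path_ltn_last (path_colored_ltn path_s); rewrite size_s; lia.
have {closing} red_xy : red x y by move: closing; rewrite construction_lt //; case: red.
have rank_le : red_rank x + a.-1 <= red_rank y.
  rewrite -size_s; apply: path_potential path_s (in2W _) => u v.
  by rewrite colored_construction1 => /andP[]; apply: red_rank_lt.
have y_neq0 : y != 0 by rewrite -lt0n; apply: leq_ltn_trans lt_xy.
have [y_X | y_Y] := ltnP y xend.
  have y_range : 0 < y < xend by rewrite lt0n y_neq0.
  by move: rank_le; rewrite /red_rank (negPf y_neq0) y_X; have := xlevel_lt y_range; lia.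
have [x0 | x_gt0] := posnP x; first by move: red_xy; rewrite x0 red0 (leq_gtF y_Y).
have x_neq0 := lt0n_neq0 x_gt0.
have [x_Y | x_X] := leqP xend x.
  move: rank_le; rewrite /red_rank (negPf y_neq0) (negPf x_neq0) (leq_gtF y_Y) (leq_gtF x_Y).
  by have := ylevel_lt y; lia.
have x_range : 0 < x < xend by rewrite x_gt0.
have lt_lvl : xlevel x < ylevel y.
  by move: rank_le; rewrite /red_rank (negPf y_neq0) (negPf x_neq0) x_X (leq_gtF y_Y); lia.
have lt_blk : yblock y < xblock x.
  by move: red_xy; rewrite redXY // (ltn_geF lt_lvl); case: ltnP.
by have := size_red_path_XY x_range y_Y lt_blk path_s; rewrite size_s; lia.
Qed.

Lemma no_blue_cycle n : n <= yend -> ~ ascending_cycle construction 2 b n.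
Proof.
move=> le_n [x [s [size_s lt_n path_s closing]]].
set y := last x s in closing.
have lt_y : y < yend by apply: leq_trans le_n; apply: (allP lt_n); apply: mem_last.
have lt_xy : x < y by have := path_ltn_last (path_colored_ltn path_s); rewrite size_s; lia.
have {closing} blue_xy : ~~ red x y by move: closing; rewrite construction_lt //; case: red.
have rank_le : blue_rank x + b.-1 <= blue_rank y.
  rewrite -size_s; apply: path_potential path_s (in2W _) => u v.
  by rewrite colored_construction2 => /andP[]; apply: blue_rank_lt.
have y_neq0 : y != 0 by rewrite -lt0n; apply: leq_ltn_trans lt_xy.
have [y_X | y_Y] := ltnP y xend.
  have y_range : 0 < y < xend by rewrite lt0n y_neq0.
  by move: rank_le; rewrite /blue_rank (negPf y_neq0) y_X; have := xblock_lt y_range; lia.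
have y_range : xend <= y < yend by rewrite y_Y.
have lt_blk_y := yblock_lt y_range.
have [x0 | x_gt0] := posnP x.
  by move: rank_le; rewrite /blue_rank x0 (negPf y_neq0) (leq_gtF y_Y) /=; lia.
have x_neq0 := lt0n_neq0 x_gt0.
have [x_Y | x_X] := leqP xend x.
  move: rank_le; rewrite /blue_rank (negPf y_neq0) (negPf x_neq0) (leq_gtF y_Y) (leq_gtF x_Y).
  lia.
have x_range : 0 < x < xend by rewrite x_gt0.
have le_blk : xblock x <= yblock y.
  by move: rank_le; rewrite /blue_rank (negPf y_neq0) (negPf x_neq0) x_X (leq_gtF y_Y); lia.
have lt_lvl : xlevel x < ylevel y.
  by move: blue_xy; rewrite redXY // (leq_gtF le_blk); case: leqP.
by have := size_blue_path_XY x_range y_range lt_lvl path_s; rewrite size_s; lia.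
Qed.

End Construction.

Lemma not_cyc_arrows_mon_cycle a b n : 1 < a -> 1 < b ->
  n.-1 <= (a - 2) * (b - 1) + (b - 2) * (a - 1) ->
  ~ cyc_arrows n a (mon_cycle a) b (mon_cycle b).
Proof.
move=> a_gt1 b_gt1 n_small arrows.
have le_n : n <= yend a b by rewrite /yend /xend; lia.
case: (arrows _ (@construction_two_coloring a b n)) => -[phi /cyc_embedding_ascending_cycle].
- by move/(_ a_gt1); apply: no_red_cycle.
- by move/(_ b_gt1); apply: no_blue_cycle.
Qed.

Theorem corollary4p11 (a b : nat) :
  2 <= a -> 2 <= b ->
  is_Rcyc a (mon_cycle a) b (mon_cycle b) (2 * a * b + 6 - 3 * a - 3 * b).
Proof.
move=> a_gt1 b_gt1; split; first by apply: cyc_arrows_mon_cycle => //; nia.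
move=> n arrows; rewrite leqNgt; apply/negP => n_small.
by apply: (not_cyc_arrows_mon_cycle a_gt1 b_gt1 _ arrows); nia.
Qed.
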